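(* If $G$ is a graph on $n$ vertices with minimum degree $\delta(G)\ge 2$, then $\gamma_{\rm tg}(G)\le \frac{3}{4}n$.
   Context: For a graph $G$ without isolated vertices, a vertex $x$ totally dominates a vertex $y$ if $x$ and $y$ are adjacent. The total domination game on $G$ is played by two players, Dominator and Staller, who alternately choose vertices of $G$, Dominator choosing first. A vertex may be chosen only if it totally dominates at least one vertex that is not totally dominated by the previously chosen vertices. The game ends when the set of chosen vertices is a total dominating set of $G$, i.e. every vertex of $G$ has a neighbor among the chosen vertices. Dominator wants to minimize the number of chosen vertices and Staller wants to maximize it. The game total domination number $\gamma_{\rm tg}(G)$ is the number of vertices chosen when Dominator starts and both players play optimally. *)

From mathcomp Require Import all_boot.
Set Implicit Arguments. Unset Strict Implicit. Unset Printing Implicit Defensive.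

Definition simple_graph (T : finType) (e : rel T) : Prop :=
  symmetric e /\ irreflexive e.

Definition nbhd (T : finType) (e : rel T) (v : T) : {set T} := [set u | e v u].

Definition min_deg_ge (T : finType) (e : rel T) (k : nat) : Prop :=
  forall v : T, k <= #|nbhd e v|.

(* v is a legal move when D is the set of already totally dominated
   vertices: v totally dominates some vertex not yet in D. *)
Definition legal (T : finType) (e : rel T) (D : {set T}) (v : T) : bool :=
  ~~ (nbhd e v \subset D).

(* Number of further moves in the total domination game under optimal play,
   from the position where D is the set of totally dominated vertices and
   it is Dominator's turn iff [dom] is true. Only D matters for the rest of
   the game (the legality condition and the end condition depend only on D).
   [fuel] bounds the number of moves; every legal move enlarges D, so
   fuel = #|T|.+1 is always sufficient. *)
Fixpoint tgame (T : finType) (e : rel T) (fuel : nat) (D : {set T}) (dom : bool)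
  : nat :=
  if D == [set: T] then 0 else
  match fuel with
  | 0 => 0
  | f.+1 =>
    if dom then
      (\big[minn/#|T|.+1]_(v | legal e D v) tgame e f (D :|: nbhd e v) false).+1
    else
      (\max_(v | legal e D v) tgame e f (D :|: nbhd e v) true).+1
  end.

Definition game_total_domination_number (T : finType) (e : rel T) : nat :=
  tgame e #|T|.+1 set0 true.

From mathcomp Require Import all_boot zify.
Set Implicit Arguments. Unset Strict Implicit. Unset Printing Implicit Defensive.

(* Give every undominated vertex weight 2 and every legal vertex weight 1;
   initially this potential is 3n.  A move v dominating k >= 1 new vertices
   lowers it by 2k plus one for each vertex it makes illegal, v included.
   If some vertex has at least two undominated neighbours, Dominator plays it
   and gains at least 5.  Otherwise every vertex has at most one undominated
   neighbour, and any move v dominating u also makes illegal a second neighbour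
   w of u (it exists since deg u >= 2), a gain of at least 4.  So 4 times the
   number of remaining moves is bounded by the potential on Dominator's turn,
   and by the potential plus one bonus unit (paid when some vertex still has
   two undominated neighbours) on Staller's turn. *)

Lemma card_setCU (T : finType) (D N : {set T}) :
  #|~: D| = #|~: (D :|: N)| + #|N :\: D|.
Proof.
have -> : N :\: D = ~: D :&: N by apply/setP=> x; rewrite !inE andbC.
have -> : ~: (D :|: N) = ~: D :\: N by apply/setP=> x; rewrite !inE negb_or andbC.
by rewrite addnC cardsID.
Qed.

Lemma bigmin_leq_cond (I : finType) (P : pred I) (F : I -> nat) K i0 :
  P i0 -> \big[minn/K]_(i | P i) F i <= F i0.
Proof.
move=> Pi0; have : i0 \in index_enum I by rewrite mem_index_enum.
elim: (index_enum I) => [//|i r IHr]; rewrite inE big_cons.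
case/orP=> [/eqP <-|/IHr le_r]; first by rewrite Pi0 geq_minl.
by case: (P i) => //; apply: leq_trans (geq_minr _ _) le_r.
Qed.

Section TotalDominationPotential.

Variables (T : finType) (e : rel T).
Implicit Types (D N S : {set T}) (v : T).

Definition rdeg (D : {set T}) (v : T) : nat := #|nbhd e v :\: D|.

Definition legal_set (D : {set T}) : {set T} := [set v | legal e D v].

Definition potential (D : {set T}) : nat := 2 * #|~: D| + #|legal_set D|.

Definition has_rdeg_gt1 (D : {set T}) : bool := [exists v, 1 < rdeg D v].

Lemma legalE D v : legal e D v = (0 < rdeg D v).
Proof. by rewrite /legal card_gt0 setD_eq0. Qed.

Lemma legal_subset D D' v : D \subset D' -> legal e D' v -> legal e D v.
Proof. by move=> sDD'; apply: contra => /subset_trans; apply. Qed.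

Lemma legal_setU_nbhd D v : ~~ legal e (D :|: nbhd e v) v.
Proof. by rewrite /legal negbK subsetUr. Qed.

Lemma has_rdeg_gt1_setU D N : ~~ has_rdeg_gt1 D -> ~~ has_rdeg_gt1 (D :|: N).
Proof.
rewrite /has_rdeg_gt1 !negb_exists => /forallP le1; apply/forallP=> x.
rewrite -leqNgt; apply: leq_trans (_ : _ <= rdeg D x) _.
  exact/subset_leq_card/setDS/subsetUl.
by rewrite leqNgt le1.
Qed.

Lemma potential_drop D N (S : {set T}) :
  S \subset legal_set D -> {in S, forall x, ~~ legal e (D :|: N) x} ->
  potential (D :|: N) + 2 * #|N :\: D| + #|S| <= potential D.
Proof.
move=> sSL illS; rewrite /potential (card_setCU D N).
suff : #|legal_set (D :|: N)| + #|S| <= #|legal_set D| by lia.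
rewrite -(cardsID S (legal_set D)) (setIidPr sSL) addnC leq_add2l.
apply/subset_leq_card/subsetP=> x; rewrite !inE => legx.
rewrite (legal_subset (subsetUl D N) legx) andbT.
by apply: contraL legx => /illS.
Qed.

Lemma potential_drop_move D v :
  legal e D v -> potential (D :|: nbhd e v) + 2 * rdeg D v + 1 <= potential D.
Proof.
move=> legv; have := @potential_drop D (nbhd e v) [set v]; rewrite cards1; apply.
  by rewrite sub1set inE.
by move=> x /set1P ->; apply: legal_setU_nbhd.
Qed.

Hypothesis e_sym : symmetric e.

Lemma legal_exists D : min_deg_ge e 1 -> D != setT -> exists v, legal e D v.
Proof.
move=> deg1; rewrite -subTset => /subsetPn [u _ uD].
have /card_gt0P [w] : 0 < #|nbhd e u| by apply: deg1.
rewrite inE => euw; exists w; rewrite legalE card_gt0.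
by apply/set0Pn; exists u; rewrite !inE uD e_sym.
Qed.

Hypothesis mindeg2 : min_deg_ge e 2.

Let mindeg1 : min_deg_ge e 1. Proof. by move=> x; apply: ltnW. Qed.

Lemma potential_drop_rdeg_le1 D v :
  ~~ has_rdeg_gt1 D -> legal e D v -> potential (D :|: nbhd e v) + 4 <= potential D.
Proof.
rewrite /has_rdeg_gt1 negb_exists => /forallP rdeg_le1 legv.
have {}rdeg_le1 x : rdeg D x <= 1 by rewrite leqNgt rdeg_le1.
have rdeg_v : 0 < rdeg D v by rewrite -legalE.
have /card_gt0P [u] := rdeg_v.
rewrite !inE => /andP [uD evu].
have /card_gt0P [w] : 0 < #|nbhd e u :\ v|.
  by have := mindeg2 u; rewrite (cardsD1 v); case: (v \in _) => /=; lia.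
rewrite !inE => /andP [wv euw].
have uNw : u \in nbhd e w :\: D by rewrite !inE uD e_sym.
have legw : legal e D w by rewrite legalE card_gt0; apply/set0Pn; exists u.
(* u is the only undominated neighbour of w, and v dominates it. *)
have illw : ~~ legal e (D :|: nbhd e v) w.
  rewrite /legal negbK; apply/subsetP=> x xNw; rewrite inE.
  case xD: (x \in D) => //=.
  have xNwD : x \in nbhd e w :\: D by rewrite inE xD xNw.
  have := card_le1P (rdeg_le1 w) x xNwD u.
  by rewrite uNw inE => /esym/eqP <-; rewrite inE.
suff : potential (D :|: nbhd e v) + 2 * rdeg D v + 2 <= potential D by lia.
have := @potential_drop D (nbhd e v) [set v; w]; rewrite cards2 eq_sym wv; apply.
  by apply/subsetP=> x /set2P [] ->; rewrite inE.
by move=> x /set2P [] ->; rewrite ?legal_setU_nbhd.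
Qed.

Lemma dominator_move D : D != setT -> exists2 v, legal e D v &
  potential (D :|: nbhd e v) + has_rdeg_gt1 (D :|: nbhd e v) + 4 <= potential D.
Proof.
move=> DT; case flagD: (has_rdeg_gt1 D).
  case/existsP: flagD => v rdeg_v; have legv : legal e D v by rewrite legalE; lia.
  by exists v => //; have := potential_drop_move legv; case: has_rdeg_gt1; lia.
have [v legv] := legal_exists mindeg1 DT.
exists v => //; have := potential_drop_rdeg_le1 (negbT flagD) legv.
by rewrite (negbTE (has_rdeg_gt1_setU _ (negbT flagD))); lia.
Qed.

Lemma staller_move D v : legal e D v ->
  potential (D :|: nbhd e v) + 4 <= potential D + has_rdeg_gt1 D.
Proof.
move=> legv; case flagD: (has_rdeg_gt1 D).
  by have := potential_drop_move legv; rewrite legalE in legv; lia.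
by have := potential_drop_rdeg_le1 (negbT flagD) legv; lia.
Qed.

Lemma tgame_potential fuel D :
  4 * tgame e fuel D true <= potential D /\
  4 * tgame e fuel D false <= potential D + has_rdeg_gt1 D.
Proof.
elim: fuel D => [|fuel IH] D /=; first by case: ifP.
case: ifP => [_ //| /negbT DT]; split.
- have [v legv drop] := dominator_move DT.
  set m := \big[minn/_]_(u | _) _.
  have le_min : m <= tgame e fuel (D :|: nbhd e v) false by apply: bigmin_leq_cond.
  have [_ IHv] := IH (D :|: nbhd e v); lia.
- have [v0 legv0] := legal_exists mindeg1 DT.
  have legal_gt0 : 0 < #|legal e D| by apply/card_gt0P; exists v0.
  have [v legv ->] := eq_bigmax_cond (fun v => tgame e fuel (D :|: nbhd e v) true)
    legal_gt0.
  have [IHv _] := IH (D :|: nbhd e v); have := staller_move legv; lia.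
Qed.

Lemma potential_set0 : potential set0 = 3 * #|T|.
Proof.
rewrite /potential setC0 cardsT.
suff -> : legal_set set0 = setT by rewrite cardsT; lia.
by apply/setP=> v; rewrite !inE legalE /rdeg setD0; exact: mindeg1.
Qed.

End TotalDominationPotential.

Theorem corollary3 (T : finType) (e : rel T) :
  simple_graph e -> min_deg_ge e 2 ->
  4 * game_total_domination_number e <= 3 * #|T|.
Proof.
move=> [e_sym _] mindeg2.
have [bound _] := tgame_potential e_sym mindeg2 #|T|.+1 set0.
by rewrite -(potential_set0 mindeg2).
Qed.
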